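(* Let $0<a,b<1$, $f\ge3$, and let $w^*_n,q^*_n,\overline w_{m,n},\overline q_n$ be as in the context. Define $[w^*(a),q^*(a)]_n:=w^*_n(a)q^*_{n+1}(a)-q^*_n(a)w^*_{n+1}(a)$ and $[\overline w,\overline q]_n:=\overline w_{n,0}\overline q_{n+1}-\overline q_n\overline w_{n+1,0}$ for $n\ge1$. Then: 1. $[w^*(a),q^*(a)]_n=a^2z^2x_a^{\,n-1}$ for all $n\ge1$; 2. $[\overline w,\overline q]_{f-1}=\frac{1-b}{1-a}[w^*(a),q^*(a)]_{f-1}=\frac{1-b}{1-a}a^2z^2x_a^{\,f-2}$; 3. $[\overline w,\overline q]_{f+j-1}=\frac{1-b}{1-a}a^2z^2x_a^{\,f-2}x(a,b)x_b^{\,j-1}$ for all $j\ge1$.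
   Context: Let $r,y,z$ be indeterminates. For $c\in(0,1)$: $\omega_c:=1-(1-c)^2r^2y^2z^2$, $\tau_c:=1+(1-c)^2r^2z^2y(1-y)$, $x_c:=c^2z^2\tau_c^2$, $\beta_c:=1+z^2(c^2-(1-c)^2r^2(y^2+c^2(1-y)^2z^2))$; $w^*_0(c):=(\beta_c-\omega_c)/x_c$, $w^*_1(c):=1$, $w^*_{n+1}(c):=\beta_cw^*_n(c)-x_cw^*_{n-1}(c)$ ($n\ge1$); $q^*_0(c):=-(1-y)(1+y+(1-c)^2r^2y^2z^2(1-y))/\tau_c^2$, $q^*_1(c):=y^2$, $q^*_{n+1}(c):=\beta_cq^*_n(c)-x_cq^*_{n-1}(c)$ ($n\ge1$). Also $\tau(a,b):=1+(1-a)(1-b)r^2z^2y(1-y)$, $x(a,b):=b^2z^2\tau(a,b)^2$, $x(b,a):=a^2z^2\tau(a,b)^2$, $\beta(a,b):=\beta_b-(b-a)b^2(1-b)r^2(1-y)^2z^4$, $\beta(b,a):=\beta_a-(a-b)a^2(1-a)r^2(1-y)^2z^4$. Downward array $\overline w_{n,m}$ ($0\le m<n$): $\overline w_{m+1,m}:=1$; for $n-m\ge2$: $\overline w_{m+\ell,m}:=w^*_\ell(a)$ if $m+\ell\le f-1$, $:=w^*_\ell(b)$ if $f-1\le m$; $\overline w_{f+j,f-2}:=\frac{1-a}{1-b}w^*_{j+2}(b)+\frac{a-b}{1-b}w^*_{j+1}(b)$ ($j\ge0$); $\overline w_{n,f-3}:=\beta(b,a)\overline w_{n,f-2}-x(b,a)\overline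 w_{n,f-1}$ ($n\ge f$); $\overline w_{n,f-\ell-2}:=\beta_a\overline w_{n,f-\ell-1}-x_a\overline w_{n,f-\ell}$ ($n\ge f$, $\ell\ge2$). The sequence $\overline q_n$, $n\ge1$: $\overline q_n:=q^*_n(a)$ for $1\le n<f$; $\overline q_f:=\frac{1-b}{1-a}q^*_f(a)+\frac{b-a}{1-a}q^*_{f-1}(a)$; $\overline q_{f+1}:=\beta(a,b)\overline q_f-x(a,b)\overline q_{f-1}$; $\overline q_{f+j+1}:=\beta_b\overline q_{f+j}-x_b\overline q_{f+j-1}$ for $j\ge1$. *)

(* r, y, z: the indeterminates, taken as (generic) elements of
   a real field R. *)
From HB Require Import structures.
From mathcomp Require Import all_boot all_order all_algebra.
Set Implicit Arguments. Unset Strict Implicit. Unset Printing Implicit Defensive.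
Import Order.TTheory GRing.Theory Num.Theory.
Local Open Scope ring_scope.

Section Defs.
Variables (R : realFieldType) (r y z : R).

Definition omega_c (c : R) : R := 1 - (1 - c) ^+ 2 * r ^+ 2 * y ^+ 2 * z ^+ 2.
Definition tau_c (c : R) : R := 1 + (1 - c) ^+ 2 * r ^+ 2 * z ^+ 2 * y * (1 - y).
Definition x_c (c : R) : R := c ^+ 2 * z ^+ 2 * tau_c c ^+ 2.
Definition beta_c (c : R) : R :=
  1 + z ^+ 2 * (c ^+ 2 - (1 - c) ^+ 2 * r ^+ 2 * (y ^+ 2 + c ^+ 2 * (1 - y) ^+ 2 * z ^+ 2)).

Fixpoint rec2 (beta x u0 u1 : R) (n : nat) : R * R :=
  match n with
  | 0%N => (u0, u1)
  | n'.+1 => let p := rec2 beta x u0 u1 n' in (p.2, beta * p.2 - x * p.1)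
  end.

Definition wstar (c : R) (n : nat) : R :=
  (rec2 (beta_c c) (x_c c) ((beta_c c - omega_c c) / x_c c) 1 n).1.

Definition qstar0 (c : R) : R :=
  - ((1 - y) * (1 + y + (1 - c) ^+ 2 * r ^+ 2 * y ^+ 2 * z ^+ 2 * (1 - y))) / tau_c c ^+ 2.

Definition qstar (c : R) (n : nat) : R :=
  (rec2 (beta_c c) (x_c c) (qstar0 c) (y ^+ 2) n).1.

Definition tau_ab (a b : R) : R := 1 + (1 - a) * (1 - b) * r ^+ 2 * z ^+ 2 * y * (1 - y).
Definition x_ab (a b : R) : R := b ^+ 2 * z ^+ 2 * tau_ab a b ^+ 2.
Definition x_ba (a b : R) : R := a ^+ 2 * z ^+ 2 * tau_ab a b ^+ 2.
Definition beta_ab (a b : R) : R :=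
  beta_c b - (b - a) * b ^+ 2 * (1 - b) * r ^+ 2 * (1 - y) ^+ 2 * z ^+ 4.
Definition beta_ba (a b : R) : R :=
  beta_c a - (a - b) * a ^+ 2 * (1 - a) * r ^+ 2 * (1 - y) ^+ 2 * z ^+ 4.

Variables (a b : R) (f : nat).

(* value \overline w_{n, f-2} for n >= f (j = n - f) *)
Definition wbar_fm2 (n : nat) : R :=
  (1 - a) / (1 - b) * wstar b (n - f + 2) + (a - b) / (1 - b) * wstar b (n - f + 1).

(* value \overline w_{n, f-1} for n >= f *)
Definition wbar_fm1 (n : nat) : R := if n == f then 1 else wstar b (n - (f - 1)).

(* downward column recursion, n >= f:
   wcol n k = (\overline w_{n, f-2-k}, \overline w_{n, f-1-k}) *)
Fixpoint wcol (n k : nat) : R * R :=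
  match k with
  | 0%N => (wbar_fm2 n, wbar_fm1 n)
  | 1%N => (beta_ba a b * wbar_fm2 n - x_ba a b * wbar_fm1 n, wbar_fm2 n)
  | k'.+1 => let p := wcol n k' in (beta_c a * p.1 - x_c a * p.2, p.1)
  end.

(* the downward array \overline w_{n,m}, meaningful for 0 <= m < n *)
Definition wbar (n m : nat) : R :=
  if n == m.+1 then 1
  else if (n <= f - 1)%N then wstar a (n - m)
  else if (f - 1 <= m)%N then wstar b (n - m)
  else (wcol n (f - 2 - m)).1.

Definition qbar_f : R :=
  (1 - b) / (1 - a) * qstar a f + (b - a) / (1 - a) * qstar a (f - 1).

(* qtail j = (\overline q_{f+j}, \overline q_{f+j-1}) *)
Fixpoint qtail (j : nat) : R * R :=
  match j with
  | 0%N => (qbar_f, qstar a (f - 1))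
  | 1%N => (beta_ab a b * qbar_f - x_ab a b * qstar a (f - 1), qbar_f)
  | j'.+1 => let p := qtail j' in (beta_c b * p.1 - x_c b * p.2, p.1)
  end.

(* \overline q_n, meaningful for n >= 1 *)
Definition qbar (n : nat) : R :=
  if (n < f)%N then qstar a n else (qtail (n - f)).1.

End Defs.

Definition bracket_star (R : realFieldType) (r y z c : R) (n : nat) : R :=
  wstar r y z c n * qstar r y z c n.+1 - qstar r y z c n * wstar r y z c n.+1.

Definition bracket_bar (R : realFieldType) (r y z a b : R) (f n : nat) : R :=
  wbar r y z a b f n 0 * qbar r y z a b f n.+1
  - qbar r y z a b f n * wbar r y z a b f n.+1 0.

(* The Casoratian C_n = u_n v_(n+1) - v_n u_(n+1) of two solutions of
   u_(n+2) = beta u_(n+1) - x u_n satisfies C_(n+1) = x C_n; item 1 follows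
   from the value a^2 z^2 at n = 1.
   Both n |-> wbar_(n,0) and n |-> qbar_n solve the a-recurrence below f, the
   mixed recurrence with (beta(a,b), x(a,b)) at the step to n = f+1, and the
   b-recurrence beyond; at n = f both are the same combination
   lambda u_f + mu u_(f-1), lambda = (1-b)/(1-a), of the starred solutions,
   which multiplies the Casoratian by lambda.  This gives items 2 and 3.
   For wbar, defined by a downward recursion in m, these relations between
   rows are not visible directly; but every row m |-> wbar_(n,m) solves the
   a-recurrence read downwards, so a linear relation between rows holds once
   it holds at the two starting columns m = f-2, f-3, where it is a rational
   identity. *)

From HB Require Import structures.
From mathcomp Require Import all_boot all_order all_algebra.
From mathcomp Require Import ring zify.
Set Implicit Arguments. Unset Strict Implicit. Unset Printing Implicit Defensive.
Import Order.TTheory GRing.Theory Num.Theory.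
Local Open Scope ring_scope.

Section ThreeTermRecurrence.
Variables (R : comPzRingType) (beta x : R).

Definition solves_rec2 (u : nat -> R) : Prop :=
  forall n, u n.+2 = beta * u n.+1 - x * u n.

Lemma eq_solves_rec2 (u v : nat -> R) :
  solves_rec2 u -> solves_rec2 v -> u 0%N = v 0%N -> u 1%N = v 1%N ->
  forall n, u n = v n.
Proof.
move=> hu hv h0 h1 n.
suff [] : u n = v n /\ u n.+1 = v n.+1 by [].
elim: n => [|n [IHn IHSn]]; first by [].
by split=> //; rewrite hu hv IHn IHSn.
Qed.

Definition casoratian (u v : nat -> R) (n : nat) : R := u n * v n.+1 - v n * u n.+1.

Lemma casoratianS (u v : nat -> R) n :
  u n.+2 = beta * u n.+1 - x * u n -> v n.+2 = beta * v n.+1 - x * v n ->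
  casoratian u v n.+1 = x * casoratian u v n.
Proof. by rewrite /casoratian => -> ->; ring. Qed.

End ThreeTermRecurrence.

Lemma rec2_solves (R : realFieldType) (beta x u0 u1 : R) :
  solves_rec2 beta x (fun n => (rec2 beta x u0 u1 n).1).
Proof. by []. Qed.

Section StarSolutions.
Variables (R : realFieldType) (r y z : R).

Local Notation beta := (beta_c r y z).
Local Notation xc := (x_c r y z).
Local Notation w := (wstar r y z).
Local Notation q := (qstar r y z).

Lemma wstar_solves c : solves_rec2 (beta c) (xc c) (w c).
Proof. exact: rec2_solves. Qed.

Lemma qstar_solves c : solves_rec2 (beta c) (xc c) (q c).
Proof. exact: rec2_solves. Qed.

Lemma wstar1 c : w c 1 = 1.
Proof. by []. Qed.

Lemma qstar1 c : q c 1 = y ^+ 2.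
Proof. by []. Qed.

Lemma x_c_neq0 c : c != 0 -> z != 0 -> tau_c r y z c != 0 -> xc c != 0.
Proof. by move=> *; rewrite !mulf_neq0 ?expf_neq0. Qed.

Lemma tau_c_neq0 c : xc c != 0 -> tau_c r y z c != 0.
Proof. by apply: contraNneq => ht; rewrite /x_c ht expr0n mulr0. Qed.

Variables (c : R) (xc_neq0 : xc c != 0).

Lemma wstar2 : w c 2 = omega_c r y z c.
Proof. by rewrite wstar_solves wstar1 /wstar /=; field. Qed.

Lemma wstar3 : w c 3 = beta c * omega_c r y z c - xc c.
Proof. by rewrite wstar_solves wstar2 wstar1 mulr1. Qed.

Lemma casoratian_star1 : casoratian (w c) (q c) 1 = c ^+ 2 * z ^+ 2.
Proof.
rewrite /casoratian qstar_solves wstar2 wstar1 qstar1 /qstar /qstar0 /=.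
rewrite /x_c /omega_c /beta_c; field.
exact: tau_c_neq0.
Qed.

Lemma casoratian_star n :
  casoratian (w c) (q c) n.+1 = c ^+ 2 * z ^+ 2 * xc c ^+ n.
Proof.
elim: n => [|n IHn]; first by rewrite casoratian_star1 mulr1.
by rewrite (casoratianS (wstar_solves c n.+1) (qstar_solves c n.+1)) IHn (exprS (xc c)); ring.
Qed.

End StarSolutions.

Section BarSolutions.
Variables (R : realFieldType) (r y z a b : R) (f : nat).
Hypotheses (xa_neq0 : x_c r y z a != 0) (xb_neq0 : x_c r y z b != 0).
Hypotheses (a_neq1 : a != 1) (b_neq1 : b != 1) (f_ge2 : (2 <= f)%N).

Local Notation beta := (beta_c r y z).
Local Notation xc := (x_c r y z).
Local Notation w := (wstar r y z).
Local Notation q := (qstar r y z).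
Local Notation wc n k := (wcol r y z a b f n k).1.
Local Notation wbar0 n := (wbar r y z a b f n 0).
Local Notation wbar0s := (wbar r y z a b f ^~ 0).
Local Notation qb := (qbar r y z a b f).
Local Notation w_rec := (wstar_solves r y z).

Let oneBa_neq0 : 1 - a != 0. Proof. by rewrite subr_eq0 eq_sym. Qed.
Let oneBb_neq0 : 1 - b != 0. Proof. by rewrite subr_eq0 eq_sym. Qed.
Let fB1S : (f - 1).+1 = f. Proof. by lia. Qed.
Let fB2S : (f - 2).+1 = (f - 1)%N. Proof. by lia. Qed.

Lemma wcol_solves n : solves_rec2 (beta a) (xc a) (fun k => wc n k).
Proof. by case. Qed.

Lemma qtail_solves : solves_rec2 (beta b) (xc b) (fun j => (qtail r y z a b f j).1).
Proof. by case. Qed.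

Lemma wbar_fm2E n :
  wbar_fm2 r y z a b f n = (1 - a) / (1 - b) * w b (n - f).+2 + (a - b) / (1 - b) * w b (n - f).+1.
Proof. by rewrite /wbar_fm2 addn2 addn1. Qed.

Lemma wbar_fm1E n : (f <= n)%N -> wbar_fm1 r y z b f n = w b (n - f).+1.
Proof.
rewrite /wbar_fm1 leq_eqVlt => /orP[/eqP <-|hn]; first by rewrite eqxx subnn.
by rewrite gtn_eqF // (_ : n - (f - 1) = (n - f).+1)%N //; lia.
Qed.

Lemma wcol_fE k :
  wc f k = (1 - b) / (1 - a) * w a k.+2 + (b - a) / (1 - a) * w a k.+1.
Proof.
move: k; apply: (eq_solves_rec2 (wcol_solves f)) => [k'||]; cbv beta.
- by rewrite (w_rec a k'.+2) (w_rec a k'.+1); ring.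
- rewrite /= wbar_fm2E subnn (wstar2 xa_neq0) (wstar2 xb_neq0) !wstar1 /omega_c.
  by field; rewrite oneBa_neq0 oneBb_neq0.
- rewrite /= wbar_fm2E wbar_fm1E // subnn (wstar3 xa_neq0) (wstar2 xa_neq0).
  rewrite (wstar2 xb_neq0) !wstar1 /omega_c /beta_ba /x_ba /beta_c /x_c /tau_ab /tau_c.
  by field; rewrite oneBa_neq0 oneBb_neq0.
Qed.

Lemma wcol_fS k :
  wc f.+1 k = beta_ab r y z a b * wc f k - x_ab r y z a b * w a k.+1.
Proof.
move: k; apply: (eq_solves_rec2 (wcol_solves f.+1)) => [k'||]; cbv beta.
- by rewrite (wcol_solves f k') (w_rec a k'.+1); ring.
- rewrite /= !wbar_fm2E subSnn subnn (wstar3 xb_neq0) (wstar2 xb_neq0) !wstar1.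
  rewrite /omega_c /beta_ab /x_ab /beta_c /x_c /tau_ab /tau_c.
  by field; rewrite oneBb_neq0.
- rewrite /= !wbar_fm2E !wbar_fm1E // subSnn subnn (wstar3 xb_neq0).
  rewrite (wstar2 xa_neq0) (wstar2 xb_neq0) !wstar1.
  rewrite /omega_c /beta_ba /x_ba /beta_ab /x_ab /beta_c /x_c /tau_ab /tau_c.
  by field; rewrite oneBb_neq0.
Qed.

Lemma wcol_SS n k : (f <= n)%N ->
  wc n.+2 k = beta b * wc n.+1 k - xc b * wc n k.
Proof.
move=> hn; move: k; apply: (eq_solves_rec2 (wcol_solves n.+2)) => [k'||]; cbv beta.
- by rewrite (wcol_solves n.+1 k') (wcol_solves n k'); ring.
- rewrite /= !wbar_fm2E !subSn ?leqW //.
  by rewrite (w_rec b (n - f)%N.+2) (w_rec b (n - f)%N.+1); ring.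
- rewrite /= !wbar_fm2E !wbar_fm1E ?leqW // !subSn ?leqW //.
  rewrite (w_rec b (n - f)%N.+2) (w_rec b (n - f)%N.+1).
  by rewrite (w_rec b (n - f)%N); ring.
Qed.

Lemma wbar0_low n : (0 < n < f)%N -> wbar0 n = w a n.
Proof.
move=> hn; rewrite /wbar subn0 (_ : (n <= f - 1)%N); last by lia.
by case: eqP => // ->.
Qed.

Lemma wbar0_high n : (f <= n)%N -> wbar0 n = wc n (f - 2).
Proof.
by move=> hn; rewrite /wbar !subn0 !ifF //; apply/negbTE; lia.
Qed.

Lemma qbar_low n : (n < f)%N -> qb n = q a n.
Proof. by rewrite /qbar => ->. Qed.

Lemma qbar_high n : (f <= n)%N -> qb n = (qtail r y z a b f (n - f)).1.
Proof. by move=> hn; rewrite /qbar ltnNge hn. Qed.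

Lemma wbar0_fE :
  wbar0 f = (1 - b) / (1 - a) * w a f + (b - a) / (1 - a) * w a (f - 1).
Proof.
by rewrite wbar0_high // wcol_fE fB2S fB1S.
Qed.

Lemma qbar_fE :
  qb f = (1 - b) / (1 - a) * q a f + (b - a) / (1 - a) * q a (f - 1).
Proof. by rewrite qbar_high // subnn. Qed.

Lemma wbar0_fS :
  wbar0 f.+1 = beta_ab r y z a b * wbar0 f - x_ab r y z a b * wbar0 (f - 1).
Proof.
by rewrite wbar0_high ?leqW // wcol_fS -wbar0_high // fB2S (@wbar0_low (f - 1)) //; lia.
Qed.

Lemma qbar_fS :
  qb f.+1 = beta_ab r y z a b * qb f - x_ab r y z a b * qb (f - 1).
Proof. by rewrite qbar_high // subSnn qbar_fE qbar_low //; lia. Qed.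

Lemma wbar0_SS n : (f <= n)%N ->
  wbar0 n.+2 = beta b * wbar0 n.+1 - xc b * wbar0 n.
Proof. by move=> hn; rewrite !wbar0_high ?leqW // wcol_SS. Qed.

Lemma qbar_SS n : (f <= n)%N -> qb n.+2 = beta b * qb n.+1 - xc b * qb n.
Proof.
by move=> hn; rewrite !qbar_high ?leqW // !subSn ?leqW // qtail_solves.
Qed.

Lemma casoratian_bar_fm1 :
  casoratian wbar0s qb (f - 1) = (1 - b) / (1 - a) * casoratian (w a) (q a) (f - 1).
Proof.
rewrite /casoratian; cbv beta; rewrite fB1S wbar0_fE qbar_fE wbar0_low ?qbar_low; try lia.
ring.
Qed.

Lemma casoratian_bar_f :
  casoratian wbar0s qb f = x_ab r y z a b * casoratian wbar0s qb (f - 1).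
Proof.
by rewrite /casoratian; cbv beta; rewrite fB1S wbar0_fS qbar_fS; ring.
Qed.

Lemma casoratian_bar_shift i :
  casoratian wbar0s qb (f + i) = x_ab r y z a b * xc b ^+ i * casoratian wbar0s qb (f - 1).
Proof.
elim: i => [|i IHi]; first by rewrite addn0 casoratian_bar_f mulr1.
rewrite addnS (casoratianS (wbar0_SS (leq_addr i f)) (qbar_SS (leq_addr i f))).
by rewrite IHi (exprS (xc b)); ring.
Qed.

End BarSolutions.

Theorem lemma4 (R : realFieldType) (r y z a b : R) (f : nat) :
  0 < a -> a < 1 -> 0 < b -> b < 1 -> (3 <= f)%N ->
  z != 0 -> tau_c r y z a != 0 -> tau_c r y z b != 0 ->
  [/\ (forall n : nat, (1 <= n)%N ->
         bracket_star r y z a n = a ^+ 2 * z ^+ 2 * x_c r y z a ^+ n.-1),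
      bracket_bar r y z a b f (f - 1) = (1 - b) / (1 - a) * bracket_star r y z a (f - 1)
      /\ bracket_bar r y z a b f (f - 1)
         = (1 - b) / (1 - a) * (a ^+ 2 * z ^+ 2 * x_c r y z a ^+ (f - 2)) &
      (forall j : nat, (1 <= j)%N ->
         bracket_bar r y z a b f (f + j - 1)
         = (1 - b) / (1 - a) * a ^+ 2 * z ^+ 2 * x_c r y z a ^+ (f - 2)
           * x_ab r y z a b * x_c r y z b ^+ j.-1)].
Proof.
move=> a_gt0 a_lt1 b_gt0 b_lt1 f_ge3 z_neq0 taua_neq0 taub_neq0.
have xa_neq0 := x_c_neq0 (lt0r_neq0 a_gt0) z_neq0 taua_neq0.
have xb_neq0 := x_c_neq0 (lt0r_neq0 b_gt0) z_neq0 taub_neq0.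
have a_neq1 : a != 1 by rewrite lt_eqF.
have b_neq1 : b != 1 by rewrite lt_eqF.
have f_ge2 : (2 <= f)%N by apply: ltnW.
have star n : (1 <= n)%N -> bracket_star r y z a n = a ^+ 2 * z ^+ 2 * x_c r y z a ^+ n.-1.
  by case: n => // n _; apply: casoratian_star.
have star_fm1 : bracket_star r y z a (f - 1) = a ^+ 2 * z ^+ 2 * x_c r y z a ^+ (f - 2).
  by rewrite star ?subn_gt0 // -subnS.
have bar_fm1 : bracket_bar r y z a b f (f - 1) = (1 - b) / (1 - a) * bracket_star r y z a (f - 1).
  exact: casoratian_bar_fm1.
split=> [//||[//|i] _]; first by rewrite -star_fm1; split.
have bar_shift : bracket_bar r y z a b f (f + i)
    = x_ab r y z a b * x_c r y z b ^+ i * bracket_bar r y z a b f (f - 1).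
  exact: casoratian_bar_shift.
by rewrite subn1 addnS /= bar_shift bar_fm1 star_fm1; ring.
Qed.
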